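(* Let $0\le\alpha\le1$ and define $\delta(X,Y)=\alpha\, m(X,Y)+(1-\alpha)M(X,Y)$ for finite sets $X,Y$. Then $\delta$ satisfies the triangle inequality $\delta(X,Y)\le\delta(X,Z)+\delta(Z,Y)$ for all finite subsets $X,Y,Z$ of $\mathbb N$ if and only if $\alpha\le\tfrac12$.
   Context: For finite sets $X,Y$ let $m(X,Y)=\min\{|X\setminus Y|,|Y\setminus X|\}$ and $M(X,Y)=\max\{|X\setminus Y|,|Y\setminus X|\}$. *)

From HB Require Import structures.
From mathcomp Require Import all_boot all_order all_algebra.
From mathcomp Require Import finmap.
From mathcomp Require Import reals.
Set Implicit Arguments. Unset Strict Implicit. Unset Printing Implicit Defensive.
Import Order.TTheory GRing.Theory Num.Theory.
Local Open Scope fset_scope.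
Local Open Scope ring_scope.

Definition msmall (X Y : {fset nat}) : nat := minn #|` X `\` Y| #|` Y `\` X|.
Definition mbig (X Y : {fset nat}) : nat := maxn #|` X `\` Y| #|` Y `\` X|.

Definition delta (R : realType) (alpha : R) (X Y : {fset nat}) : R :=
  alpha * (msmall X Y)%:R + (1 - alpha) * (mbig X Y)%:R.

From HB Require Import structures.
From mathcomp Require Import all_boot all_order all_algebra.
From mathcomp Require Import finmap.
From mathcomp Require Import reals.
From mathcomp Require Import lra.
Import Order.TTheory GRing.Theory Num.Theory.
Local Open Scope fset_scope.
Local Open Scope ring_scope.

(* Since m + M = |X \ Y| + |Y \ X|, we have
   delta = alpha (m + M) + (1 - 2 alpha) M.  Both m + M and M satisfy the
   triangle inequality, because |X \ Y| <= |X \ Z| + |Z \ Y|; so delta does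
   whenever 1 - 2 alpha >= 0.  Conversely, for X = {1}, Y = {2}, Z = {} the
   triangle inequality reads 1 <= 2 (1 - alpha), i.e. alpha <= 1/2. *)

Lemma card_fsetD_triangle (X Y Z : {fset nat}) :
  (#|` X `\` Y| <= #|` X `\` Z| + #|` Z `\` Y|)%N.
Proof.
apply: leq_trans (leq_card_fsetU _ _).
apply: fsubset_leq_card; apply/fsubsetP => x.
by rewrite !inE => /andP [-> ->]; case: (x \in Z).
Qed.

Lemma msmall_add_mbig X Y : (msmall X Y + mbig X Y = #|` X `\` Y| + #|` Y `\` X|)%N.
Proof. exact: addn_min_max. Qed.

Lemma msmall_add_mbig_triangle X Y Z :
  (msmall X Y + mbig X Y <=
     (msmall X Z + mbig X Z) + (msmall Z Y + mbig Z Y))%N.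
Proof.
rewrite !msmall_add_mbig addnACA [(#|` Z `\` X| + _)%N]addnC.
exact: leq_add (card_fsetD_triangle _ _ _) (card_fsetD_triangle _ _ _).
Qed.

Lemma mbig_triangle X Y Z : (mbig X Y <= mbig X Z + mbig Z Y)%N.
Proof.
rewrite geq_max; apply/andP; split.
  exact: leq_trans (card_fsetD_triangle X Y Z) (leq_add (leq_maxl _ _) (leq_maxl _ _)).
rewrite addnC.
exact: leq_trans (card_fsetD_triangle Y X Z) (leq_add (leq_maxr _ _) (leq_maxr _ _)).
Qed.

Lemma deltaE (R : realType) (alpha : R) X Y :
  delta alpha X Y =
    alpha * (msmall X Y + mbig X Y)%:R + (1 - 2 * alpha) * (mbig X Y)%:R.
Proof. rewrite /delta natrD; lra. Qed.

Lemma delta_triangle (R : realType) (alpha : R) X Y Z :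
  0 <= alpha -> alpha <= 1 / 2 ->
  delta alpha X Y <= delta alpha X Z + delta alpha Z Y.
Proof.
move=> alpha_ge0 alpha_le_half; rewrite !deltaE.
have sum_triangle := msmall_add_mbig_triangle X Y Z.
have max_triangle := mbig_triangle X Y Z.
rewrite -!(ler_nat R) !natrD in sum_triangle max_triangle.
have := ler_wpM2l alpha_ge0 sum_triangle.
have coef_ge0 : 0 <= 1 - 2 * alpha by lra.
have := ler_wpM2l coef_ge0 max_triangle.
rewrite !mulrDr; lra.
Qed.

Lemma fsetD_distinct_singletons (m n : nat) : m != n -> [fset m] `\` [fset n] = [fset m].
Proof.
move=> neq_mn; apply/fsetP => x; rewrite !inE.
by case: eqP => [->|//]; rewrite eq_sym (negPf neq_mn).
Qed.

Lemma delta_distinct_singletons (R : realType) (alpha : R) (m n : nat) :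
  m != n -> delta alpha [fset m] [fset n] = 1.
Proof.
move=> neq_mn; have neq_nm : n != m by rewrite eq_sym.
rewrite /delta /msmall /mbig !fsetD_distinct_singletons //.
by rewrite !cardfs1 minnn maxnn; lra.
Qed.

Lemma delta_fset0l (R : realType) (alpha : R) n : delta alpha fset0 [fset n] = 1 - alpha.
Proof. by rewrite /delta /msmall /mbig fsetD0 fset0D cardfs0 cardfs1 min0n max0n; lra. Qed.

Lemma delta_fset0r (R : realType) (alpha : R) n : delta alpha [fset n] fset0 = 1 - alpha.
Proof. by rewrite /delta /msmall /mbig fsetD0 fset0D cardfs0 cardfs1 minn0 maxn0; lra. Qed.

Theorem mainTheorem7 (R : realType) (alpha : R) (h0 : 0 <= alpha) (h1 : alpha <= 1) :
  (forall X Y Z : {fset nat}, delta alpha X Y <= delta alpha X Z + delta alpha Z Y)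
  <-> alpha <= 1 / 2.
Proof.
split=> [triangle | alpha_le_half X Y Z]; last exact: delta_triangle.
have := triangle [fset 1%N] [fset 2%N] fset0.
by rewrite delta_distinct_singletons // delta_fset0r delta_fset0l; lra.
Qed.
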